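(* Let $K$ be a local field of characteristic $p>0$, and let $L$ be any totally ramified and purely inseparable extension of $K$ of degree $p^n$. Let $b$ be an integer with $0<b<p^n$ and $\gcd(b,p)=1$. Then there is an action of $\mathcal{A}(n)$ on $L$ which makes $L$ into an $\mathcal{A}(n)$-Hopf Galois extension of $K$, and which admits an $\mathcal{A}(n)$-scaffold on $L$ with all shift parameters equal to $b$ (i.e. $b_1=\dots=b_n=b$) and with tolerance $\mathfrak{T}=\infty$.
   Context: A local field here is a field complete with respect to a discrete valuation whose residue field has characteristic $p$; $v_K,v_L$ are normalized valuations, $\mathfrak{O}_K$ the valuation ring of $K$, $\mathfrak{P}_L$ the maximal ideal of $\mathfrak{O}_L$. The divided power $K$-Hopf algebra $\mathcal{A}(n)$ is the $K$-vector space with basis $t_0,\dots,t_{p^n-1}$, multiplication $t_it_j=\binom{i+j}{j}t_{i+j}$ if $i+j<p^n$ and $0$ otherwise, $t_0$ the identity, comultiplication $\Delta(t_r)=\sum_{j=0}^r t_j\otimes t_{r-j}$, counit $\epsilon(t_r)=\delta_{0,r}$, antipode $t_r\mapsto(-1)^rt_r$. For a $K$-Hopf algebra $H$, $L$ is an $H$-module algebra if $H$ acts $K$-linearly on $L$ with $h(st)=\mu(\Delta(h)(s\otimes t))$ ($\mu$ the multiplication of $L$) and $h\cdot1=\epsilon(h)1$; $L/K$ is $H$-Hopf Galois if moreover the map $L\otimes_K H\to\mathrm{End}_K(L)$, $(s\otimes h)\mapsto(x\mapsto s\,h(x))$, is bijective. Scaffolds: let $\mathbb{S}_{p^n}=\{0,\dots,p^n-1\}$,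 $s=\sum_{i=1}^n s_{(n-i)}p^{n-i}$ with digits in $\{0,\dots,p-1\}$; for integers $b_1,\dots,b_n$ prime to $p$, $\mathfrak{b}(s)=\sum_i s_{(n-i)}p^{n-i}b_i$ and $\mathfrak{a}(t)\in\mathbb{S}_{p^n}$ ($t\in\mathbb{Z}$) is the unique element with $\mathfrak{b}(\mathfrak{a}(t))\equiv-t\pmod{p^n}$. For a $K$-algebra $A$ of dimension $p^n$ acting $K$-linearly on $L$ (with $[L:K]=p^n$ totally ramified), an $A$-scaffold of tolerance $\infty$ with shift parameters $b_1,\dots,b_n$ consists of (i) $\lambda_t\in L$ ($t\in\mathbb{Z}$) with $v_L(\lambda_t)=t$ and $\lambda_{t_1}\lambda_{t_2}^{-1}\in K$ whenever $t_1\equiv t_2\pmod{p^n}$, and (ii) $\Psi_1,\dots,\Psi_n\in A$ with $\Psi_i\cdot1=0$ such that for each $i,t$ there is $u_{i,t}\in\mathfrak{O}_K^\times$ with $\Psi_i\cdot\lambda_t=u_{i,t}\lambda_{t+p^{n-i}b_i}$ if $\mathfrak{a}(t)_{(n-i)}\ge1$ and $\Psi_i\cdot\lambda_t=0$ if $\mathfrak{a}(t)_{(n-i)}=0$. *)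

From HB Require Import structures.
From mathcomp Require Import all_boot all_order all_algebra all_field.
Set Implicit Arguments. Unset Strict Implicit. Unset Printing Implicit Defensive.
Import Order.TTheory GRing.Theory Num.Theory.
Local Open Scope ring_scope.

(* A normalized discrete valuation on a field F, given on F^x (the value at 0,
   which is +oo, is irrelevant and never used). *)
Definition normalized_dval (F : fieldType) (v : F -> int) : Prop :=
  [/\ (forall x y : F, x != 0 -> y != 0 -> v (x * y) = v x + v y),
      (forall x y : F, x != 0 -> y != 0 -> x + y != 0 ->
          Num.min (v x) (v y) <= v (x + y))
    & (forall z : int, exists2 x : F, x != 0 & v x = z)].

(* "w has valuation >= M", with v(0) = +oo *)
Definition val_ge (F : fieldType) (v : F -> int) (w : F) (M : int) : Prop :=
  w = 0 \/ M <= v w.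

Definition dval_complete (F : fieldType) (v : F -> int) : Prop :=
  forall u : nat -> F,
    (forall M : int, exists N : nat, forall m k : nat, (N <= m)%N -> (N <= k)%N ->
        val_ge v (u m - u k) M) ->
    exists l : F, forall M : int, exists N : nat, forall m : nat, (N <= m)%N ->
        val_ge v (u m - l) M.

Section DividedPower.
Variables (K : fieldType) (L : fieldExtType K) (N : nat).

(* The divided power Hopf algebra A(n), N = p^n: an element is its coefficient
   vector a on the basis t_0, ..., t_{N-1}, i.e. a = \sum_r a r t_r. *)
Definition adiv := {ffun 'I_N -> K}.

(* t_i t_j = C(i+j, j) t_{i+j} if i + j < N, 0 otherwise, extended bilinearly *)
Definition adiv_mul (a b : adiv) : adiv :=
  [ffun k : 'I_N => \sum_(i < N) \sum_(j < N | (i + j)%N == k)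
                      a i * b j * ('C(i + j, j))%:R].

Definition adiv_one : adiv := [ffun k : 'I_N => ((k : nat) == 0%N)%:R].

Definition adiv_counit (a : adiv) : K :=
  \sum_(r < N | (r : nat) == 0%N) a r.

(* A K-linear action of A(n) on L, determined by the images T r of the basis
   elements t_r in End_K(L). *)
Definition adiv_act (T : 'I_N -> 'End(L)) (a : adiv) : 'End(L) :=
  \sum_(r < N) a r *: T r.

(* L is an A(n)-module algebra:
   - module: (ab).x = a.(b.x), 1.x = x
   - h(st) = mu(Delta(h)(s (x) t)), with Delta(t_r) = \sum_{i+j=r} t_i (x) t_j
   - h.1 = eps(h) 1 *)
Definition adiv_module_algebra (T : 'I_N -> 'End(L)) : Prop :=
  [/\ (forall (a b : adiv) (x : L),
          adiv_act T (adiv_mul a b) x = adiv_act T a (adiv_act T b x)),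
      (forall x : L, adiv_act T adiv_one x = x),
      (forall (a : adiv) (s t : L),
          adiv_act T a (s * t) =
          \sum_(r < N) a r *: (\sum_(i < N) \sum_(j < N | (i + j)%N == r)
                                   T i s * T j t))
    & (forall a : adiv, adiv_act T a 1 = (adiv_counit a)%:A)].

(* Hopf Galois: the map L (x)_K A(n) -> End_K(L), s (x) h |-> (x |-> s h(x)),
   is bijective.  An element of L (x)_K A(n) is written uniquely as
   \sum_r s_r (x) t_r, i.e. as the family s : {ffun 'I_N -> L}. *)
Definition adiv_hopf_galois_map (T : 'I_N -> 'End(L)) (s : {ffun 'I_N -> L})
  : 'End(L) := \sum_(r < N) (amull (s r) \o T r)%VF.

Definition adiv_hopf_galois (T : 'I_N -> 'End(L)) : Prop :=
  adiv_module_algebra T /\ bijective (adiv_hopf_galois_map T).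

End DividedPower.

Definition digit (p k s : nat) : nat := (s %/ p ^ k) %% p.

(* frak b (s) = \sum_{i=1}^n s_(n-i) p^(n-i) b_i ; here i : 'I_n stands for i+1 *)
Definition frak_b (p n : nat) (bs : 'I_n -> int) (s : nat) : int :=
  \sum_(i < n) (digit p (n - i.+1) s)%:Z * (p ^ (n - i.+1))%:Z * bs i.

(* An A-scaffold of tolerance infinity with shift parameters b_1..b_n for the
   action act : A -> End_K(L) (A = coefficient vectors {ffun 'I_(p^n) -> K}).
   frak a (t) is the unique s in S_{p^n} with frak b (s) = -t mod p^n; the
   condition is stated for every such s. *)
Definition scaffold_infty (K : fieldType) (L : fieldExtType K) (p n : nat)
  (vK : K -> int) (vL : L -> int)
  (act : {ffun 'I_(p ^ n) -> K} -> 'End(L)) (bs : 'I_n -> int) : Prop :=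
  (forall i, coprimez (bs i) p%:Z) /\
  exists (lam : int -> L) (Psi : 'I_n -> {ffun 'I_(p ^ n) -> K}),
  [/\ (forall t : int, lam t != 0 /\ vL (lam t) = t),
      (forall t1 t2 : int, (t1 == t2 %[mod (p ^ n)%:Z])%Z ->
          exists c : K, lam t1 * (lam t2)^-1 = c%:A),
      (forall i : 'I_n, act (Psi i) 1 = 0)
    & (forall (i : 'I_n) (t : int), exists u : K,
         [/\ u != 0, vK u = 0 &
          forall s : nat, (s < p ^ n)%N ->
            (frak_b p bs s == - t %[mod (p ^ n)%:Z])%Z ->
            if (1 <= digit p (n - i.+1) s)%N
            then act (Psi i) (lam t) = u%:A * lam (t + (p ^ (n - i.+1))%:Z * bs i)
            else act (Psi i) (lam t) = 0])].
Arguments scaffold_infty {K L} p n vK vL act bs.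

From HB Require Import structures.
From mathcomp Require Import all_boot all_order all_algebra all_field.
From mathcomp Require Import ring zify.
Import Order.TTheory GRing.Theory Num.Theory.
Local Open Scope ring_scope.

Set Implicit Arguments. Unset Strict Implicit. Unset Printing Implicit Defensive.

(* Choose y in L with v_L(y) = -b.  Since b is prime to p, the valuations of
   1, y, ..., y^(p^n - 1) are pairwise incongruent modulo p^n, the index of
   v_L(K^x) in Z, so these powers form a K-basis of L; pure inseparability
   then forces y^(p^n) into K.  Hence the Hasse derivatives
   D_r(y^m) = C(m, r) y^(m - r) are well defined (C(m + p^n, r) = C(m, r) mod p
   for r < p^n); by Vandermonde's identity t_r |-> D_r makes L an
   A(n)-module algebra, and the action is triangular on the basis, which gives
   the Hopf Galois property.  Writing t = -bj + p^n k with 0 <= j < p^n and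
   lambda_t = y^j pi^k (pi a uniformizer of K), Lucas' theorem gives
   D_(p^m) lambda_t = j_(m) lambda_(t + p^m b), with j_(m) the m-th base p
   digit of j: a scaffold with all shift parameters equal to b. *)

Lemma bin_trinomial m i j :
  ('C(m, j) * 'C(m - j, i) = 'C(i + j, j) * 'C(m, i + j))%N.
Proof.
have [le_ijm|lt_mij] := leqP (i + j) m; last first.
  rewrite (bin_small lt_mij) muln0.
  have [le_jm|lt_mj] := leqP j m; last by rewrite bin_small.
  by rewrite (@bin_small (m - j)) ?muln0 // ltn_subLR // addnC.
have le_jm : (j <= m)%N by apply: leq_trans le_ijm; rewrite leq_addl.
have le_imj : (i <= m - j)%N by rewrite leq_subRL // addnC.
apply/eqP; rewrite -(@eqn_pmul2r (j`! * i`! * (m - (i + j))`!)) ?muln_gt0 ?fact_gt0 //.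
apply/eqP.
have fact_m := bin_fact le_jm; have fact_mj := bin_fact le_imj.
have fact_ij := bin_fact (leq_addl i j); have fact_m' := bin_fact le_ijm.
rewrite addnK in fact_ij; rewrite subnAC in fact_mj; rewrite subnDA in fact_m' *.
transitivity (m`!); first by rewrite -fact_m -fact_mj; ring.
by rewrite -fact_m' -fact_ij; ring.
Qed.

Lemma big_ord_addn_eq (V : nmodType) (N i r : nat) (F : nat -> V) : (r < N)%N ->
  \sum_(j < N | (i + j)%N == r) F j = if (i <= r)%N then F (r - i)%N else 0.
Proof.
move=> lt_rN; have [le_ir|lt_ri] := leqP i r.
  rewrite (eq_bigl (fun j : 'I_N => j == (r - i)%N :> nat)) ?big_ord1_eq.
    by rewrite (leq_ltn_trans (leq_subr _ _) lt_rN).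
  by move=> j /=; apply/eqP/eqP => [<-|->]; rewrite ?addKn ?subnKC.
rewrite big_pred0 // => j; apply/negP => /eqP eq_r.
by move: lt_ri; rewrite -eq_r ltnNge leq_addr.
Qed.

Lemma exprD1n_mod_sqr (R : comPzRingType) (z : R) (q : nat) :
  exists Q, (z + 1) ^+ q = 1 + q%:R * z + z ^+ 2 * Q.
Proof.
elim: q => [|q [Q IH]]; first by exists 0; rewrite expr0 mul0r mulr0 !addr0.
by exists (q%:R + Q * z + Q); rewrite exprS IH mulrS; ring.
Qed.

Lemma coef_XD1n (R : nzRingType) (m i : nat) :
  (('X + 1 : {poly R}) ^+ m)`_i = ('C(m, i))%:R.
Proof.
rewrite exprD1n coef_sum.
under eq_bigr do rewrite coefMn coefXn.
have [le_im|lt_mi] := ltnP i m.+1; last first.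
  rewrite bin_small // big1 // => k _; rewrite gtn_eqF ?mul0rn //.
  exact: leq_trans (ltn_ord k) lt_mi.
rewrite (bigD1 (Ordinal le_im)) //= eqxx mulr1n big1 ?addr0 // => k.
by rewrite -val_eqE eq_sym => /negPf /= ->; rewrite mul0rn.
Qed.

Section BinomialPchar.
Variables (R : comNzRingType) (p : nat).
Hypothesis pcharRp : p \in [pchar R].

Lemma exprXD1_pchar m : ('X + 1 : {poly R}) ^+ (p ^ m) = 'X^(p ^ m) + 1.
Proof.
have pcharPp : p \in [pchar {poly R}] by rewrite pchar_poly.
rewrite exprDn_pchar ?expr1n // (eq_pnat _ (pcharf_eq pcharPp)).
by rewrite pnatX pnat_id // (pcharf_prime pcharRp).
Qed.

Lemma natr_binD_expn_pchar m a r :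
  (r < p ^ m)%N -> ('C(a + p ^ m, r))%:R = ('C(a, r))%:R :> R.
Proof.
move=> lt_r; rewrite -!(coef_XD1n R) exprD exprXD1_pchar mulrDr mulr1 coefD coefMXn.
by rewrite lt_r add0r.
Qed.

Lemma natr_bin_expn_pchar m j : ('C(j, p ^ m))%:R = (digit p m j)%:R :> R.
Proof.
have pm_gt0 : (0 < p ^ m)%N by rewrite expn_gt0 prime_gt0 // (pcharf_prime pcharRp).
rewrite /digit (GRing.natr_mod_pchar pcharRp) -(coef_XD1n R) {1}(divn_eq j (p ^ m)).
rewrite exprD mulnC exprM exprXD1_pchar.
have [Q ->] := exprD1n_mod_sqr ('X^(p ^ m) : {poly R}) (j %/ p ^ m).
set q := (j %/ p ^ m)%N; set P := ('X + 1) ^+ (j %% p ^ m).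
have -> : (1 + q%:R * 'X^(p ^ m) + 'X^(p ^ m) ^+ 2 * Q) * P =
          P + (q%:R + 'X^(p ^ m) * Q) * P * 'X^(p ^ m) by rewrite expr2; ring.
rewrite coefD coefMXn ltnn subnn coef0M coefD coefXnM pm_gt0 addr0 coef_XD1n.
by rewrite bin_small ?ltn_pmod // coef_XD1n bin0 mulr1 add0r -polyC_natr coefC.
Qed.

End BinomialPchar.

Lemma sum_digits (p n s : nat) : (1 < p)%N ->
  (\sum_(i < n) digit p i s * p ^ i = s %% p ^ n)%N.
Proof.
move=> p_gt1; elim: n => [|n IH]; first by rewrite big_ord0 expn0 modn1.
rewrite big_ord_recr /= IH /digit.
set q := (s %/ p ^ n)%N; set r := (s %% p ^ n)%N.
have pn_gt0 : (0 < p ^ n)%N by rewrite expn_gt0; lia.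
have lt_r : (r < p ^ n)%N by rewrite ltn_pmod.
have lt_qp : (q %% p < p)%N by rewrite ltn_pmod //; lia.
have def_s : s = (q %/ p * p ^ n.+1 + (r + q %% p * p ^ n))%N.
  by rewrite {1}(divn_eq s (p ^ n)) -/q -/r {1}(divn_eq q p) expnS; ring.
have lt_rq : (r + q %% p * p ^ n < p ^ n.+1)%N.
  have : (q %% p * p ^ n <= (p - 1) * p ^ n)%N by rewrite leq_mul2r; lia.
  rewrite expnS; nia.
by rewrite [in RHS]def_s modnMDl (modn_small lt_rq).
Qed.

Lemma dvdz_coprime_mulB_eq (N : nat) (b : int) (j j' : nat) : coprimez b N%:Z ->
  (j < N)%N -> (j' < N)%N -> (N%:Z %| b * (j%:Z - j'%:Z))%Z -> j = j'.
Proof.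
move=> coprime_bN lt_jN lt_j'N; rewrite Gauss_dvdzr 1?coprimez_sym //.
case/dvdzP => q def_q; have q0 : q = 0 by nia.
by move: def_q; rewrite q0 mul0r; lia.
Qed.

Lemma coprimez_expn (b : int) p n : coprimez b p%:Z -> coprimez b (p ^ n)%N%:Z.
Proof. by rewrite !coprimezE !absz_nat; apply: coprimeXr. Qed.

Section DiscreteValuation.
Variables (F : fieldType) (v : F -> int).
Hypothesis dval_v : normalized_dval v.

Lemma dvalM x y : x != 0 -> y != 0 -> v (x * y) = v x + v y.
Proof. by case: dval_v => vM _ _; apply: vM. Qed.

Lemma dval1 : v 1 = 0.
Proof.
by have := dvalM (oner_neq0 F) (oner_neq0 F); rewrite mulr1 -{1}[v 1]addr0 => /addrI.
Qed.

Lemma dvalN x : x != 0 -> v (- x) = v x.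
Proof.
have N1_neq0 : (-1 : F) != 0 by rewrite oppr_eq0 oner_eq0.
have vN1 : v (-1) = 0 by have := dvalM N1_neq0 N1_neq0; rewrite mulrNN mulr1 dval1; lia.
by move=> x_neq0; rewrite -mulN1r dvalM // vN1 add0r.
Qed.

Lemma dvalX x k : x != 0 -> v (x ^+ k) = v x *+ k.
Proof.
move=> x_neq0; elim: k => [|k IH]; first by rewrite expr0 dval1.
by rewrite exprS dvalM ?expf_neq0 // IH mulrS.
Qed.

Lemma dvalV x : x != 0 -> v x^-1 = - v x.
Proof.
by move=> x_neq0; have := dvalM x_neq0 (invr_neq0 x_neq0); rewrite divff // dval1; lia.
Qed.

Lemma dvalXz x (z : int) : x != 0 -> v (x ^ z) = v x * z.
Proof.
move=> x_neq0; case: z => k /=; first by rewrite dvalX // pmulrn mulrzz.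
by rewrite dvalV ?expf_neq0 // dvalX // pmulrn mulrzz NegzE mulrN.
Qed.

Lemma dvalD_lt x y : x != 0 -> y != 0 -> v x < v y -> x + y != 0 /\ v (x + y) = v x.
Proof.
move=> x_neq0 y_neq0 lt_xy.
have xy_neq0 : x + y != 0.
  by apply: contraTneq lt_xy => /(canRL (addKr x)); rewrite addr0 => ->; rewrite dvalN ?ltxx.
split=> //; case: dval_v => _ vD _.
have Ny_neq0 : - y != 0 by rewrite oppr_eq0.
have le_x_xy : v x <= v (x + y).
  by have := vD _ _ x_neq0 y_neq0 xy_neq0; rewrite (min_idPl (ltW lt_xy)).
have le_xy_x : v (x + y) <= v x.
  have := vD _ _ xy_neq0 Ny_neq0 _; rewrite addrK dvalN // ge_min.
  by case/(_ x_neq0)/orP => //; rewrite leNgt lt_xy.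
by apply/eqP; rewrite eq_le le_xy_x le_x_xy.
Qed.

Lemma dval_sum_distinct (I : eqType) (s : seq I) (f : I -> F) :
  uniq s -> s != [::] -> {in s, forall i, f i != 0} ->
  {in s &, forall i j, i != j -> v (f i) != v (f j)} ->
  \sum_(i <- s) f i != 0 /\ exists2 i, i \in s & v (\sum_(i <- s) f i) = v (f i).
Proof.
elim: s => [//|a s IH] /= /andP[a_notin_s uniq_s] _ f_neq0 v_inj.
case: s IH a_notin_s uniq_s f_neq0 v_inj => [|a' s] IH a_notin_s uniq_s f_neq0 v_inj.
  by rewrite big_seq1; split; [apply: f_neq0 | exists a]; rewrite ?mem_seq1.
have f_neq0' : {in a' :: s, forall i, f i != 0}.
  by move=> i i_in; apply: f_neq0; rewrite inE i_in orbT.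
have v_inj' : {in a' :: s &, forall i j, i != j -> v (f i) != v (f j)}.
  by move=> i j i_in j_in; apply: v_inj; rewrite inE ?i_in ?j_in orbT.
have [S_neq0 [i i_in vS]] := IH uniq_s isT f_neq0' v_inj'.
rewrite big_cons; set S := \sum_(i <- a' :: s) f i in S_neq0 vS *.
have fa_neq0 : f a != 0 by apply: f_neq0; rewrite inE eqxx.
have a_neq_i : a != i by apply/eqP => def_a; rewrite def_a i_in in a_notin_s.
have v_neq : v (f a) != v S.
  by rewrite vS; apply: v_inj; rewrite // in_cons ?eqxx ?i_in ?orbT.
case: ltgtP v_neq => // lt_v _.
  have [sum_neq0 v_sum] := dvalD_lt fa_neq0 S_neq0 lt_v.
  by split=> //; exists a; rewrite ?inE ?eqxx.
have [sum_neq0 v_sum] := dvalD_lt S_neq0 fa_neq0 lt_v.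
rewrite [f a + _]addrC; split=> //.
by exists i; rewrite ?v_sum // in_cons i_in orbT.
Qed.

Lemma dval_natr_pchar p (m : nat) : p \in [pchar F] -> (m%:R : F) != 0 -> v m%:R = 0.
Proof.
move=> pcharFp m_neq0; have p_gt1 := prime_gt1 (pcharf_prime pcharFp).
have := dvalX p m_neq0; rewrite -pFrobenius_autE (pFrobenius_aut_nat pcharFp).
move=> vXp; suff : v m%:R * p%:Z = v m%:R by nia.
by rewrite {2}vXp -mulrzz -pmulrn.
Qed.

End DiscreteValuation.

Lemma free_dval_incongruent (K : fieldType) (L : fieldExtType K)
    (vK : K -> int) (vL : L -> int) (e : int) m (x : 'I_m -> L) :
  normalized_dval vL -> (forall k : K, k != 0 -> vL k%:A = e * vK k) ->
  (forall i, x i != 0) -> (forall i j, (vL (x i) == vL (x j) %[mod e])%Z -> i = j) ->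
  free [tuple x i | i < m].
Proof.
move=> dval_vL vL_scalar x_neq0 x_incongruent.
apply/freeP => k sum_kx0 i; apply/eqP/negP => /negP ki_neq0.
pose s := [seq j <- index_enum 'I_m | k j != 0].
pose f j := k j *: x j.
have vf j : k j != 0 -> f j != 0 /\ vL (f j) = e * vK (k j) + vL (x j).
  move=> kj_neq0; have kjA_neq0 : (k j)%:A != 0 :> L.
    by rewrite scaler_eq0 negb_or kj_neq0 oner_neq0.
  rewrite /f -mulr_algl mulf_neq0 // dvalM // vL_scalar //.
have sum_f0 : \sum_(j <- s) f j = 0.
  rewrite big_filter big_mkcond -[RHS]sum_kx0; apply: eq_bigr => j _.
  by rewrite /f -tnth_nth tnth_mktuple; case: eqP => // ->; rewrite scale0r.
have [] := dval_sum_distinct dval_vL (s := s) (f := f).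
- by rewrite filter_uniq // index_enum_uniq.
- have i_in_s : i \in s by rewrite mem_filter ki_neq0 mem_index_enum.
  by apply: contraTneq i_in_s => ->.
- by move=> j; rewrite mem_filter => /andP[/vf[]].
- move=> j j'; rewrite !mem_filter => /andP[/vf[_ ->] _] /andP[/vf[_ ->] _] /eqP j_neq.
  apply/eqP => eq_v; apply: j_neq (x_incongruent _ _ _); rewrite eqz_mod_dvd.
  by apply/dvdzP; exists (vK (k j') - vK (k j)); nia.
by rewrite sum_f0 eqxx.
Qed.

Lemma basis_expr_dval (K : fieldType) (L : fieldExtType K)
    (vK : K -> int) (vL : L -> int) (N : nat) (y : L) :
  normalized_dval vL -> (forall k : K, k != 0 -> vL k%:A = N%:Z * vK k) ->
  \dim {:L} = N -> y != 0 -> coprimez (vL y) N%:Z ->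
  basis_of fullv [tuple y ^+ i | i < N].
Proof.
move=> dval_vL vL_scalar dimL y_neq0 coprime_vy.
rewrite basisEfree subvf size_map size_enum_ord dimL leqnn !andbT.
apply: (free_dval_incongruent dval_vL vL_scalar) => [i|i j]; first exact: expf_neq0.
rewrite !dvalX // eqz_mod_dvd !pmulrn !mulrzz -mulrBr => /(dvdz_coprime_mulB_eq coprime_vy).
by move=> /(_ (ltn_ord i) (ltn_ord j)) /val_inj.
Qed.

Lemma exprXsubC_pchar (R : comNzRingType) (y : R) m : [pchar R].-nat m ->
  ('X - y%:P) ^+ m = 'X^m - (y ^+ m)%:P.
Proof.
move=> pnat_m; have pnat_mP : [pchar {poly R}].-nat m by rewrite (eq_pnat _ (@pchar_poly R)).
by rewrite exprDn_pchar // exprNn_pchar // rmorphXn.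
Qed.

Lemma adjoin_degree_basis_expr (K : fieldType) (L : fieldExtType K) N (y : L) :
  basis_of fullv [tuple y ^+ i | i < N] -> adjoin_degree 1 y = N.
Proof.
move=> powers_basis; rewrite adjoin_degreeE dimv1 divn1.
have -> : <<1; y>>%VS = fullv.
  apply/eqP; rewrite eqEsubv subvf /= -(span_basis powers_basis).
  by apply/span_subvP => z /mapP[i _ ->]; apply/rpredX/memv_adjoin.
by rewrite (size_basis powers_basis).
Qed.

Lemma purely_inseparable_expr_adjoin_degree (K : fieldType) (L : fieldExtType K)
    p k (y : L) :
  p \in [pchar K] -> purely_inseparable_element 1 y -> adjoin_degree 1 y = (p ^ k)%N ->
  y ^+ (p ^ k) \in 1%VS.
Proof.
move=> pcharKp /purely_inseparable_elementP_pchar[e pnat_e ye_in1] deg_y.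
have pcharLp : p \in [pchar L] by rewrite pchar_lalg.
have : minPoly 1 y %| ('X - y%:P) ^+ e.
  rewrite exprXsubC_pchar // minPoly_dvdp ?polyOverXnsubC //.
  by rewrite rootE !hornerE subrr.
case/dvdp_exp_XsubCP => m _ eq_minPoly.
have def_minPoly : minPoly 1 y = ('X - y%:P) ^+ m.
  by apply/eqP; rewrite -eqp_monic ?monic_minPoly ?monic_exp ?monicXsubC.
have m_eq : m = (p ^ k)%N.
  by have := size_minPoly 1 y; rewrite def_minPoly size_exp_XsubC deg_y => -[].
have p_prime := pcharf_prime pcharKp.
have pnat_pk : [pchar L].-nat (p ^ k)%N.
  by rewrite (eq_pnat _ (pcharf_eq pcharLp)) pnatX pnat_id.
have := polyOverP (minPolyOver 1 y) 0.
rewrite def_minPoly m_eq exprXsubC_pchar // coefB coefXn coefC /=.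
by rewrite ltn_eqF ?expn_gt0 ?prime_gt0 // sub0r rpredN.
Qed.

Section DividedPowerAction.
Variables (K : fieldType) (L : fieldExtType K) (N : nat) (U : 'I_N -> 'End(L)).

Lemma adiv_actE (a : adiv K N) x : adiv_act U a x = \sum_(r < N) a r *: U r x.
Proof. by rewrite sum_lfunE; apply: eq_bigr => r _; rewrite scale_lfunE. Qed.

Definition adiv_t (r : 'I_N) : adiv K N := [ffun k => (k == r)%:R].

Lemma adiv_act_t r : adiv_act U (adiv_t r) = U r.
Proof.
rewrite /adiv_act (bigD1 r) //= big1 => [|k /negPf k_neq_r].
  by rewrite ffunE eqxx scale1r addr0.
by rewrite ffunE k_neq_r scale0r.
Qed.

Lemma adiv_hopf_galois_map_is_linear : linear (adiv_hopf_galois_map U).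
Proof.
move=> k s s'; rewrite /adiv_hopf_galois_map scaler_sumr -big_split.
by apply: eq_bigr => r _; rewrite !ffunE linearP /= comp_lfunDl comp_lfunZl.
Qed.

HB.instance Definition _ := GRing.isLinear.Build K {ffun 'I_N -> L} 'End(L) *:%R
  (adiv_hopf_galois_map U) adiv_hopf_galois_map_is_linear.

End DividedPowerAction.

Lemma amullE (K : fieldType) (A : falgType K) (u x : A) : amull u x = u * x.
Proof. by rewrite lfunE. Qed.

Lemma amulrE (K : fieldType) (A : falgType K) (u x : A) : amulr u x = x * u.
Proof. by rewrite lfunE. Qed.

Section HasseDerivative.
Variables (K : fieldType) (L : fieldExtType K) (p n : nat) (y : L) (c : K).
Hypothesis pcharKp : p \in [pchar K].
Local Notation N := (p ^ n)%N.
Local Notation X := [tuple y ^+ i | i < N].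
Hypotheses (yN : y ^+ N = c%:A) (powers_basis : basis_of fullv X).

Let N_gt0 : (0 < N)%N.
Proof. by rewrite expn_gt0 prime_gt0 // (pcharf_prime pcharKp). Qed.

Let pcharLp : p \in [pchar L].
Proof. by rewrite pchar_lalg. Qed.

Let nth_powers (i : 'I_N) : X`_i = y ^+ i.
Proof. by rewrite -tnth_nth tnth_mktuple. Qed.

Lemma coord_powers m (j : 'I_N) : (m < N)%N -> coord X j (y ^+ m) = (m == j)%:R.
Proof.
move=> lt_mN; rewrite -[m]/(nat_of_ord (Ordinal lt_mN)) -nth_powers.
by rewrite coord_free // (basis_free powers_basis).
Qed.

Lemma eq_lfun_powers (f g : 'End(L)) :
  (forall i : 'I_N, f (y ^+ i) = g (y ^+ i)) -> f = g.
Proof.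
move=> eq_fg; apply/lfunP => z; rewrite (coord_basis powers_basis (memvf z)).
by rewrite !linear_sum; apply: eq_bigr => i _; rewrite !linearZ /= nth_powers eq_fg.
Qed.

Definition hasse_fun (r : nat) (z : L) : L :=
  \sum_(i < N) coord X i z *: (y ^+ (i - r) *+ 'C(i, r)).

Lemma hasse_fun_is_linear r : linear (hasse_fun r).
Proof.
move=> a u v; rewrite /hasse_fun scaler_sumr -big_split; apply: eq_bigr => i _.
by rewrite linearP /= scalerDl scalerA.
Qed.

HB.instance Definition _ r :=
  GRing.isLinear.Build K L L *:%R (hasse_fun r) (hasse_fun_is_linear r).

Definition hasse (r : nat) : 'End(L) := linfun (hasse_fun r).

Lemma hasse_basis r m : (m < N)%N -> hasse r (y ^+ m) = y ^+ (m - r) *+ 'C(m, r).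
Proof.
move=> lt_mN; rewrite /hasse lfunE /= /hasse_fun (bigD1 (Ordinal lt_mN)) //=.
rewrite coord_powers // eqxx scale1r big1 ?addr0 // => j.
by rewrite coord_powers // -val_eqE eq_sym => /negPf ->; rewrite scale0r.
Qed.

Lemma hasse_expr r m : (r < N)%N -> hasse r (y ^+ m) = y ^+ (m - r) *+ 'C(m, r).
Proof.
move=> lt_rN; elim: m {-2}m (leqnn m) => [|M IH] m le_mM.
  by move: le_mM; rewrite leqn0 => /eqP ->; apply: hasse_basis.
have [lt_mN|le_Nm] := ltnP m N; first exact: hasse_basis.
have def_ym : y ^+ m = c *: y ^+ (m - N) by rewrite -{1}(subnKC le_Nm) exprD yN mulr_algl.
have bin_mN : ('C(m, r))%:R = ('C(m - N, r))%:R :> L.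
  by rewrite -{1}(subnK le_Nm) (natr_binD_expn_pchar pcharLp).
rewrite def_ym linearZ /= IH; last by move: le_Nm le_mM N_gt0; lia.
rewrite -[_ *+ 'C(m, r)]mulr_natr -[_ *+ 'C(m - N, r)]mulr_natr bin_mN scalerAl.
have [le_r_mN|lt_mN_r] := leqP r (m - N); last by rewrite bin_small // !mulr0.
by rewrite -mulr_algl -yN -exprD; congr (_ ^+ _ * _); lia.
Qed.

Lemma hasse_small r : (N <= r)%N -> hasse r = 0.
Proof.
move=> le_Nr; apply: eq_lfun_powers => m; rewrite hasse_basis // zero_lfunE.
by rewrite bin_small ?mulr0n // (leq_trans (ltn_ord m) le_Nr).
Qed.

Lemma hasse0 : hasse 0 = \1%VF.
Proof. by apply: eq_lfun_powers => m; rewrite hasse_basis // id_lfunE subn0 bin0. Qed.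

Lemma hasse_1 r : hasse r 1 = (r == 0)%:R.
Proof. by rewrite -(expr0 y) hasse_basis // bin0n. Qed.

Lemma hasse_comp i j : (hasse i \o hasse j)%VF = ('C(i + j, j))%:R *: hasse (i + j).
Proof.
apply: eq_lfun_powers => m; rewrite comp_lfunE scale_lfunE !hasse_basis //.
rewrite raddfMn /= hasse_basis; last exact: leq_ltn_trans (leq_subr _ _) (ltn_ord m).
by rewrite -mulrnA scaler_nat -mulrnA mulnC bin_trinomial [in RHS]mulnC subnDA subnAC.
Qed.

Lemma hasse_basisM r a b : (r < N)%N -> (a < N)%N -> (b < N)%N ->
  hasse r (y ^+ a * y ^+ b) = \sum_(i < r.+1) hasse i (y ^+ a) * hasse (r - i) (y ^+ b).
Proof.
move=> lt_rN lt_aN lt_bN; rewrite -exprD hasse_expr //.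
under eq_bigr => i _ do rewrite !hasse_basis // mulrnAl mulrnAr -mulrnA.
rewrite (eq_bigr (fun i : 'I_r.+1 => y ^+ (a + b - r) *+ ('C(a, i) * 'C(b, r - i)))).
  by rewrite sumrMnr binomial.Vandermonde.
move=> i _; rewrite mulnC; have [le_ia|lt_ai] := leqP i a; last first.
  by rewrite (@bin_small a) ?mul0n ?mulr0n.
have [le_rib|lt_bri] := leqP (r - i) b; last by rewrite (@bin_small b) ?muln0 ?mulr0n.
by rewrite -exprD; congr (_ ^+ _ *+ _); move: (ltn_ord i); lia.
Qed.

Lemma hasseM r s t : (r < N)%N ->
  hasse r (s * t) = \sum_(i < r.+1) hasse i s * hasse (r - i) t.
Proof.
move=> lt_rN.
have hasseMr (b : 'I_N) s' :
    hasse r (s' * y ^+ b) = \sum_(i < r.+1) hasse i s' * hasse (r - i) (y ^+ b).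
  have := congr1 (fun f : 'End(L) => f s') (_ : (hasse r \o amulr (y ^+ b))%VF =
    \sum_(i < r.+1) (amulr (hasse (r - i) (y ^+ b)) \o hasse i)%VF).
  rewrite comp_lfunE amulrE sum_lfunE => ->; last first.
    apply: eq_lfun_powers => a; rewrite comp_lfunE amulrE hasse_basisM // sum_lfunE.
    by apply: eq_bigr => i _; rewrite comp_lfunE amulrE.
  by apply: eq_bigr => i _; rewrite comp_lfunE amulrE.
have := congr1 (fun f : 'End(L) => f t) (_ : (hasse r \o amull s)%VF =
  \sum_(i < r.+1) (amull (hasse i s) \o hasse (r - i))%VF).
rewrite comp_lfunE amullE sum_lfunE => ->; last first.
  apply: eq_lfun_powers => b; rewrite comp_lfunE amullE hasseMr sum_lfunE.
  by apply: eq_bigr => i _; rewrite comp_lfunE amullE.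
by apply: eq_bigr => i _; rewrite comp_lfunE amullE.
Qed.

Local Notation hasse_family := (fun r : 'I_N => hasse r).

Lemma hasse_compE (i j : 'I_N) x :
  hasse i (hasse j x) = \sum_(k < N | (i + j)%N == k) ('C(i + j, j))%:R *: hasse k x.
Proof.
rewrite -comp_lfunE hasse_comp scale_lfunE.
rewrite (eq_bigl (fun k : 'I_N => k == (i + j)%N :> nat)) => [|k]; last by rewrite eq_sym.
rewrite (big_ord1_eq _ (fun k => ('C(i + j, j))%:R *: hasse k x)).
by case: ltnP => // le_N_ij; rewrite hasse_small // zero_lfunE scaler0.
Qed.

Lemma hasse_module_algebra : adiv_module_algebra hasse_family.
Proof.
split=> [a b x|x|a s t|a].
- rewrite !adiv_actE /adiv_mul.
  transitivity (\sum_(k < N) \sum_(i < N) \sum_(j < N | (i + j)%N == k)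
                  (a i * b j * ('C(i + j, j))%:R) *: hasse k x).
    apply: eq_bigr => k _; rewrite ffunE scaler_suml.
    by under eq_bigr do rewrite scaler_suml.
  rewrite exchange_big; apply: eq_bigr => i _ /=; rewrite (exchange_big_dep xpredT) //=.
  rewrite linear_sum scaler_sumr; apply: eq_bigr => j _.
  rewrite linearZ /= hasse_compE !scaler_sumr.
  by apply: eq_bigr => k _; rewrite !scalerA mulrA.
- have -> : adiv_one K N = adiv_t K (Ordinal N_gt0) by apply/ffunP => k; rewrite !ffunE.
  by rewrite adiv_act_t hasse0 id_lfunE.
- rewrite adiv_actE; apply: eq_bigr => r _; rewrite hasseM //; congr (_ *: _).
  under [RHS]eq_bigr => i _
    do rewrite (@big_ord_addn_eq _ N i r (fun j => hasse i s * hasse j t) (ltn_ord r)).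
  rewrite -big_mkcond /=.
  by rewrite -(big_ord_widen _ (fun i => hasse i s * hasse (r - i) t) (ltn_ord r)).
- rewrite adiv_actE /adiv_counit scaler_suml [RHS]big_mkcond /=.
  by apply: eq_bigr => r _; rewrite hasse_1; case: eqP; rewrite ?scaler0.
Qed.

Lemma hasse_galois_map_eq0 (s : {ffun 'I_N -> L}) :
  adiv_hopf_galois_map hasse_family s = 0 -> s = 0.
Proof.
move=> map_s0.
have triangular (m : 'I_N) : \sum_(k < N) s k * (y ^+ (m - k) *+ 'C(m, k)) = 0.
  transitivity (adiv_hopf_galois_map hasse_family s (y ^+ m)).
    by rewrite sum_lfunE; apply: eq_bigr => k _; rewrite comp_lfunE amullE hasse_basis.
  by rewrite map_s0 zero_lfunE.
suff s_lt0 m (k : 'I_N) : (k < m)%N -> s k = 0.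
  by apply/ffunP => k; rewrite ffunE (s_lt0 k.+1).
elim: m k => [//|m IH] k; rewrite ltnS leq_eqVlt => /orP[/eqP def_k|]; last exact: IH.
have := triangular k; rewrite (bigD1 k) //= subnn binn expr0 mulr1 big1 ?addr0 //.
move=> k' k'_neq_k.
have [lt_k'k|le_kk'] := ltnP k' k; first by rewrite IH ?mul0r // -def_k.
by rewrite bin_small ?mulr0n ?mulr0 // ltn_neqAle le_kk' andbT val_eqE eq_sym.
Qed.

Lemma hasse_hopf_galois : adiv_hopf_galois hasse_family.
Proof.
split; first exact: hasse_module_algebra.
pose G : 'Hom({ffun 'I_N -> L}, 'End(L)) := linfun (adiv_hopf_galois_map hasse_family).
have GE s : G s = adiv_hopf_galois_map hasse_family s by rewrite lfunE.
have G_inj : lker G == 0%VS.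
  apply/lker0P => s1 s2; rewrite !GE => eq_s12.
  apply/eqP; rewrite -subr_eq0; apply/eqP/hasse_galois_map_eq0.
  by rewrite raddfB /= eq_s12 subrr.
have G_onto : limg G = fullv.
  apply/eqP; rewrite eqEdim subvf /= limg_dim_eq; last by rewrite (eqP G_inj) capv0.
  rewrite !dimvf; change (dim L * dim L <= #|'I_N| * dim L)%N.
  by rewrite card_ord -dimvf (size_basis powers_basis).
by exists (G^-1)%VF => [s|f]; rewrite -GE ?lker0_lfunK // limg_lfunVK // G_onto memvf.
Qed.

End HasseDerivative.

Lemma frak_b_const p n (b : int) s : (1 < p)%N -> (s < p ^ n)%N ->
  frak_b p (fun _ : 'I_n => b) s = b * s%:Z.
Proof.
move=> p_gt1 lt_s; rewrite /frak_b -[in RHS](modn_small lt_s) -sum_digits //.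
rewrite (big_morph Posz PoszD (erefl (Posz 0))) mulr_sumr [RHS](reindex_inj rev_ord_inj) /=.
by apply: eq_bigr => i _; rewrite PoszM mulrC.
Qed.

Section Scaffold.
Variables (K : fieldType) (L : fieldExtType K) (p n : nat) (vK : K -> int) (vL : L -> int).
Variables (b : int) (y : L) (pi : K) (u : int).
Local Notation N := (p ^ n)%N.
Local Notation Nz := (p ^ n)%N%:Z.
Hypotheses (pcharKp : p \in [pchar K]) (dval_vK : normalized_dval vK).
Hypothesis dval_vL : normalized_dval vL.
Hypothesis vL_scalar : forall k : K, k != 0 -> vL k%:A = Nz * vK k.
Hypothesis powers_basis : basis_of fullv [tuple y ^+ i | i < N].
Hypotheses (y_neq0 : y != 0) (vLy : vL y = - b) (pi_neq0 : pi != 0) (vKpi : vK pi = 1).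
Hypotheses (coprime_bp : coprimez b p%:Z) (u_inv : (Nz %| u * b - 1)%Z).

Let p_gt1 : (1 < p)%N.
Proof. exact/prime_gt1/(pcharf_prime pcharKp). Qed.

Let coprime_bN : coprimez b Nz.
Proof. exact: coprimez_expn. Qed.

Let Nz_gt0 : 0 < Nz.
Proof. by rewrite ltz_nat expn_gt0 ltnW. Qed.

(* [lam t = y ^+ j * pi ^ k] with [0 <= j < p ^ n] and [t = - b j + p ^ n k]. *)
Definition lam_y (t : int) : nat := `|((- t * u) %% Nz)%Z|%N.
Definition lam_pi (t : int) : int := ((t + b * (lam_y t)%:Z) %/ Nz)%Z.
Definition lam (t : int) : L := y ^+ lam_y t * (pi ^ lam_pi t)%:A.

Lemma lam_y_lt t : (lam_y t < N)%N.
Proof. by rewrite -ltz_nat /lam_y gez0_abs ?modz_ge0 ?ltz_pmod ?gt_eqF. Qed.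

Lemma dvdz_lam_y t : (Nz %| t + b * (lam_y t)%:Z)%Z.
Proof.
rewrite /lam_y gez0_abs ?modz_ge0 ?gt_eqF //; set q := (- t * u %/ Nz)%Z.
have -> : ((- t * u) %% Nz)%Z = - t * u - q * Nz by rewrite {2}(divz_eq (- t * u) Nz); ring.
case/dvdzP: u_inv => r def_r; have ub : u * b = r * Nz + 1 by rewrite -def_r; ring.
apply/dvdzP; exists (- t * r - b * q).
by transitivity (t - t * (u * b) - b * q * Nz); [ring | rewrite ub; ring].
Qed.

Lemma lam_yP t (j : nat) : (j < N)%N -> (Nz %| t + b * j%:Z)%Z -> lam_y t = j.
Proof.
move=> lt_jN dvd_j; apply: (dvdz_coprime_mulB_eq coprime_bN (lam_y_lt t) lt_jN).
have -> : b * ((lam_y t)%:Z - j%:Z) = (t + b * (lam_y t)%:Z) - (t + b * j%:Z) by ring.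
by rewrite rpredB ?dvdz_lam_y.
Qed.

Lemma lam_piP t : t + b * (lam_y t)%:Z = Nz * lam_pi t.
Proof. by rewrite /lam_pi [Nz * _]mulrC divzK ?dvdz_lam_y. Qed.

Lemma lamE t (j : nat) (k : int) : (j < N)%N -> t + b * j%:Z = Nz * k ->
  lam t = y ^+ j * (pi ^ k)%:A.
Proof.
move=> lt_jN def_t; have lam_yE : lam_y t = j.
  by apply: lam_yP lt_jN _; apply/dvdzP; exists k; rewrite def_t mulrC.
have lam_piE : lam_pi t = k.
  by apply: (mulfI (lt0r_neq0 Nz_gt0)); rewrite -lam_piP lam_yE def_t.
by rewrite /lam lam_yE lam_piE.
Qed.

Lemma lam_neq0 t : lam t != 0.
Proof. by rewrite /lam mulf_neq0 ?expf_neq0 // -in_algE fmorph_eq0 expfz_neq0. Qed.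

Lemma dval_lam t : vL (lam t) = t.
Proof.
have piX_neq0 : pi ^ lam_pi t != 0 by rewrite expfz_neq0.
rewrite /lam dvalM ?expf_neq0 // -?in_algE ?fmorph_eq0 // in_algE.
rewrite dvalX // vL_scalar // dvalXz // vKpi mul1r vLy.
by have := lam_piP t; rewrite pmulrn mulrzz; lia.
Qed.

Lemma lam_ratio t1 t2 : (t1 == t2 %[mod Nz])%Z -> exists k : K, lam t1 / lam t2 = k%:A.
Proof.
rewrite eqz_mod_dvd => /dvdzP[q def_q].
have def_lam1 : lam t1 = y ^+ lam_y t2 * (pi ^ (q + lam_pi t2))%:A.
  by apply: lamE (lam_y_lt t2) _; have := lam_piP t2; rewrite mulrDr; lia.
exists (pi ^ (q + lam_pi t2) / pi ^ lam_pi t2).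
rewrite def_lam1 /lam invfM mulrACA divff ?expf_neq0 // mul1r.
by rewrite -!in_algE fmorph_div.
Qed.

Lemma hasse_lam m t : (m < n)%N ->
  hasse p n y (p ^ m) (lam t) = (digit p m (lam_y t))%:R *: lam (t + (p ^ m)%:Z * b).
Proof.
move=> lt_mn; set j := lam_y t; set d := digit p m j.
have pcharLp : p \in [pchar L] by rewrite pchar_lalg.
rewrite {1}/lam mulr_algr linearZ /= hasse_basis ?lam_y_lt //.
rewrite -mulr_natr (natr_bin_expn_pchar pcharLp) -/j -/d scaler_nat.
have [->|d_gt0] := posnP d; first by rewrite mulr0 scaler0 mulr0n.
have le_pm_j : (p ^ m <= j)%N.
  rewrite -divn_gt0; last by rewrite expn_gt0 ltnW.
  by move: d_gt0; rewrite /d /digit; case: (j %/ p ^ m)%N => //; rewrite mod0n.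
rewrite (@lamE _ (j - p ^ m) (lam_pi t)).
- by rewrite mulr_natr -scalerMnr mulr_algr.
- by move: (lam_y_lt t); rewrite -/j; lia.
by rewrite -(lam_piP t) -(subzn le_pm_j); ring.
Qed.

Lemma hasse_scaffold :
  scaffold_infty p n vK vL (adiv_act (fun r : 'I_N => hasse p n y r)) (fun _ : 'I_n => b).
Proof.
split=> [//|].
have lt_pm_N (i : 'I_n) : (p ^ (n - i.+1) < N)%N.
  by rewrite ltn_exp2l //; move: (ltn_ord i); lia.
exists lam, (fun i => adiv_t K (Ordinal (lt_pm_N i))); split.
- by move=> t; split; [apply: lam_neq0 | apply: dval_lam].
- exact: lam_ratio.
- by move=> i; rewrite adiv_act_t hasse_1 // eqn0Ngt expn_gt0 (ltnW p_gt1).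
move=> i t; set m := (n - i.+1)%N; set d := digit p m (lam_y t).
have d_neq0 : (0 < d)%N -> (d%:R : K) != 0.
  move=> d_gt0; rewrite -(dvdn_pcharf pcharKp); apply/negP => /(dvdn_leq d_gt0).
  by rewrite leqNgt ltn_pmod // ltnW.
exists (if (0 < d)%N then d%:R else 1); split.
- by case: ifP => [/d_neq0|]; rewrite ?oner_neq0.
- by case: ifP => [/d_neq0/(dval_natr_pchar dval_vK pcharKp)|_]; rewrite ?dval1.
move=> s lt_sN frak_s; have -> : s = lam_y t.
  by apply/esym/lam_yP => //; move: frak_s; rewrite frak_b_const // eqz_mod_dvd opprK addrC.
rewrite adiv_act_t /= hasse_lam -/d; last by move: (ltn_ord i); rewrite /m; lia.
by case: posnP => [->|_]; rewrite ?scale0r // mulr_algl.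
Qed.

End Scaffold.

Theorem theorem5p1 (p : nat) (K : fieldType) (L : fieldExtType K) (n : nat)
    (vK : K -> int) (vL : L -> int) (b : int) :
    p \in [pchar K] ->
    normalized_dval vK -> dval_complete vK ->
    normalized_dval vL ->
    (forall x : K, x != 0 -> vL x%:A = (p ^ n)%:Z * vK x) ->
    \dim {:L} = (p ^ n)%N ->
    purely_inseparable 1%VS {:L} ->
    0 < b < (p ^ n)%:Z -> coprimez b p%:Z ->
  exists T : 'I_(p ^ n) -> 'End(L),
    adiv_hopf_galois T /\
    scaffold_infty p n vK vL (adiv_act T) (fun _ : 'I_n => b).
Proof.
move=> pcharKp dval_vK _ dval_vL vL_scalar dimL insepL _ coprime_bp.
have [pi pi_neq0 vKpi] : exists2 pi : K, pi != 0 & vK pi = 1 by case: dval_vK => _ _.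
have [y y_neq0 vLy] : exists2 y : L, y != 0 & vL y = - b by case: dval_vL => _ _.
have coprime_bN := coprimez_expn n coprime_bp.
have powers_basis : basis_of fullv [tuple y ^+ i | i < p ^ n].
  by apply: basis_expr_dval dval_vL vL_scalar dimL y_neq0 _; rewrite vLy coprimeNz.
have /vlineP[c yN] : y ^+ (p ^ n) \in 1%VS.
  apply: (purely_inseparable_expr_adjoin_degree pcharKp).
    by move/purely_inseparableP: insepL; apply; rewrite memvf.
  exact: adjoin_degree_basis_expr powers_basis.
have [[u v] /= uv_bezout] := coprimezP _ _ coprime_bN.
have u_inv : ((p ^ n)%N%:Z %| u * b - 1)%Z.
  by apply/dvdzP; exists (- v); rewrite -uv_bezout; ring.
exists (fun r => hasse p n y r); split; first exact: hasse_hopf_galois pcharKp yN powers_basis.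
exact: hasse_scaffold pcharKp dval_vK dval_vL vL_scalar powers_basis y_neq0 vLy pi_neq0 vKpi
  coprime_bp u_inv.
Qed.
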